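(* Let $g$ be an odd positive integer and $j$ an integer with $0\leqslant j\leqslant (g-1)/2$. Then $\beta_-^{\,j+(g-1)/2}\beta_+^{\,g-1}\zeta_{g-2j-1}$ is congruent modulo $J_g$ to $c\,\gamma^{g-1}$ for some positive rational number $c$.
   Context: In $\mathbb{C}[\alpha,\beta,\gamma]$: $\zeta_i=0$ for $i<0$, $\zeta_0=1$, $\zeta_{k+1}=\alpha\zeta_k+k^2(\beta+(-1)^k8)\zeta_{k-1}+2k(k-1)\gamma\zeta_{k-2}$ for $k\geqslant0$; $J_k=(\zeta_k,\zeta_{k+1},\zeta_{k+2})$; $\beta_\pm=\beta\pm8$. *)

From HB Require Import structures.
From mathcomp Require Import all_boot all_order all_algebra all_field.
From mathcomp Require Import mpoly.
Set Implicit Arguments. Unset Strict Implicit. Unset Printing Implicit Defensive.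
Import Order.TTheory GRing.Theory Num.Theory.
Local Open Scope ring_scope.

Definition P := {mpoly algC[3]}.

Definition alpha : P := 'X_(0 : 'I_3).
Definition beta  : P := 'X_(1 : 'I_3).
Definition gamma : P := 'X_(2 : 'I_3).

Definition beta_plus  : P := beta + 8%:R.
Definition beta_minus : P := beta - 8%:R.

(* zs n = zeta_{n-2}; so zs 0 = zeta_{-2} = 0, zs 1 = zeta_{-1} = 0,
   zs 2 = zeta_0 = 1, and for k >= 0, zs (k+3) = zeta_{k+1} given by
   zeta_{k+1} = alpha zeta_k + k^2 (beta + (-1)^k 8) zeta_{k-1}
                + 2 k (k-1) gamma zeta_{k-2}. *)
Fixpoint zs (n : nat) : P :=
  match n with
  | 0 => 0
  | 1 => 0
  | 2 => 1
  | S ((S ((S k) as k1)) as k2) =>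
      alpha * zs k2
      + (k%:R ^+ 2) * (beta + (-1) ^+ k * 8%:R) * zs k1
      + 2%:R * k%:R * (k%:R - 1) * gamma * zs k
  end.

Definition zeta (k : nat) : P := zs k.+2.

Definition congr_mod_J (k : nat) (p q : P) : Prop :=
  exists a b d : P, p - q = a * zeta k + b * zeta k.+1 + d * zeta k.+2.

From HB Require Import structures.
From mathcomp Require Import all_boot all_order all_algebra all_field.
From mathcomp Require Import mpoly.
From mathcomp Require Import ring lra zify.
Set Implicit Arguments.
Unset Strict Implicit.
Unset Printing Implicit Defensive.

Import Order.TTheory GRing.Theory Num.Theory.
Local Open Scope ring_scope.

(** Write [wzeta n k] for beta_-^(n + floor(k/2)) beta_+^(n + ceil(k/2)) zeta_k; the
    element of the theorem is beta_+^i * wzeta (2j) (2i) with i = (g-1)/2 - j.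
    Since alpha and beta_- lie in J_1 and gamma J_h is contained in J_(h+1) (the
    recurrence for zeta_(h+3) solves for gamma zeta_h), modulo J_(h+1) the products
    of gamma^h with alpha or beta_- vanish and beta_+ acts as 16.  Multiplying the
    recurrence for zeta_(k+2) by a suitable weight expresses (k+1)^2 wzeta n k
    through wzeta (n-1) (k+1), wzeta (n-2) (k+2) and gamma * wzeta n (k-1), all at
    level n+k+1.  Induction on n, then k, gives wzeta n k == c gamma^(n+k) modulo
    J_(n+k+1) for a rational c, and the induced recurrence on c shows that
    (-1)^k c > 0 whenever n is even. *)

Section IdealOfThree.
Variables (R : comNzRingType) (a b c : R).

Definition ideal3 (x : R) : Prop := exists u v w, x = u * a + v * b + w * c.

Lemma ideal3_0 : ideal3 0.
Proof. by exists 0, 0, 0; ring. Qed.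

Lemma ideal3_gen1 : ideal3 a. Proof. by exists 1, 0, 0; ring. Qed.
Lemma ideal3_gen2 : ideal3 b. Proof. by exists 0, 1, 0; ring. Qed.
Lemma ideal3_gen3 : ideal3 c. Proof. by exists 0, 0, 1; ring. Qed.

Lemma ideal3D x y : ideal3 x -> ideal3 y -> ideal3 (x + y).
Proof.
by move=> [u [v [w ->]]] [u' [v' [w' ->]]]; exists (u + u'), (v + v'), (w + w'); ring.
Qed.

Lemma ideal3Ml y x : ideal3 x -> ideal3 (y * x).
Proof. by move=> [u [v [w ->]]]; exists (y * u), (y * v), (y * w); ring. Qed.

Lemma ideal3B x y : ideal3 x -> ideal3 y -> ideal3 (x - y).
Proof. by move=> Ix Iy; rewrite -mulN1r; apply: ideal3D => //; apply: ideal3Ml. Qed.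

Lemma ideal3_cancel y k x : y * k = 1 -> ideal3 (k * x) -> ideal3 x.
Proof. by move=> yk1 Ikx; rewrite -[x]mul1r -yk1 -mulrA; apply: ideal3Ml. Qed.

Lemma ideal3_subX x y n : ideal3 (x - y) -> ideal3 (x ^+ n - y ^+ n).
Proof.
move=> Ixy; elim: n => [|n IHn]; first by rewrite subrr; apply: ideal3_0.
have -> : x ^+ n.+1 - y ^+ n.+1 = x * (x ^+ n - y ^+ n) + y ^+ n * (x - y).
  by rewrite !exprS; ring.
by apply: ideal3D; apply: ideal3Ml.
Qed.

End IdealOfThree.

Lemma sign_oddE (R : pzRingType) k : (-1) ^+ k = (if odd k then -1 else 1) :> R.
Proof. by rewrite -signr_odd; case: (odd k). Qed.

Local Notation J g := (ideal3 (zeta g) (zeta g.+1) (zeta g.+2)).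
Local Notation ratP c := ((ratr c : algC)%:MP : P).

Lemma zeta0 : zeta 0 = 1. Proof. by []. Qed.
Lemma zeta1 : zeta 1 = alpha. Proof. by rewrite /zeta /=; ring. Qed.
Lemma zeta2 : zeta 2 = alpha * zeta 1 + beta_minus.
Proof. by rewrite /zeta /beta_minus /=; ring. Qed.

Lemma zeta_rec k :
  zeta k.+3 = alpha * zeta k.+2 + (k.+2 ^ 2)%:R * (beta + (-1) ^+ k * 8%:R) * zeta k.+1
              + (2 * k.+2 * k.+1)%:R * gamma * zeta k.
Proof.
have zsS n : zs n.+3 = alpha * zs n.+2 + (n%:R ^+ 2) * (beta + (-1) ^+ n * 8%:R) * zs n.+1
                       + 2%:R * n%:R * (n%:R - 1) * gamma * zs n by [].
by rewrite /zeta zsS !exprS; ring.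
Qed.

Lemma zeta_in_J g m : (g <= m)%N -> J g (zeta m).
Proof.
elim/ltn_ind: m => m IHm le_gm.
have [lt_m_g3 | le_g3_m] := ltnP m (g + 3).
  have : m = g \/ m = g.+1 \/ m = g.+2 by lia.
  by case=> [|[|]] ->; [apply: ideal3_gen1 | apply: ideal3_gen2 | apply: ideal3_gen3].
have [k m_eq] : exists k, m = k.+3 by exists (m - 3)%N; lia.
by rewrite m_eq zeta_rec; do !apply: ideal3D; apply: ideal3Ml; apply: IHm; lia.
Qed.

Lemma J_natr_cancel g N x : (0 < N)%N -> J g (N%:R * x) -> J g x.
Proof.
move=> N_gt0; apply: (ideal3_cancel (y := ((N%:R)^-1 : algC)%:MP)).
by rewrite -mpolyC_nat -mpolyCM mulVf ?mpolyC1 // pnatr_eq0 -lt0n.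
Qed.

Lemma J_gamma g x : J g x -> J g.+1 (gamma * x).
Proof.
have J_gamma_zeta : J g.+1 (gamma * zeta g).
  apply: (@J_natr_cancel _ (2 * g.+2 * g.+1)); first by lia.
  have -> : (2 * g.+2 * g.+1)%:R * (gamma * zeta g) = zeta g.+3 - alpha * zeta g.+2
      - (g.+2 ^ 2)%:R * (beta + (-1) ^+ g * 8%:R) * zeta g.+1 by rewrite zeta_rec; ring.
  by apply: ideal3B; [apply: ideal3B | apply: ideal3Ml];
    [| apply: ideal3Ml |]; apply: zeta_in_J; lia.
case=> u [v [w ->]].
have -> : gamma * (u * zeta g + v * zeta g.+1 + w * zeta g.+2)
    = u * (gamma * zeta g) + v * gamma * zeta g.+1 + w * gamma * zeta g.+2 by ring.
by do !apply: ideal3D; apply: ideal3Ml => //; apply: zeta_in_J; lia.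
Qed.

Lemma gammaX_J g x : J 1 x -> J g.+1 (gamma ^+ g * x).
Proof.
move=> J1x; elim: g => [|g IHg]; first by rewrite mul1r.
by rewrite exprS -mulrA; apply: J_gamma.
Qed.

Lemma J1_alpha : J 1 alpha.
Proof. by rewrite -zeta1; apply: ideal3_gen1. Qed.

Lemma J1_beta_minus : J 1 beta_minus.
Proof.
have -> : beta_minus = zeta 2 - alpha * zeta 1 by rewrite zeta2; ring.
by apply: ideal3B; [apply: ideal3_gen2 | apply: ideal3Ml; apply: ideal3_gen1].
Qed.

Lemma J1_beta_plus : J 1 (beta_plus - ratP 16%:R).
Proof.
have -> : beta_plus - ratP 16%:R = beta_minus by rewrite /beta_plus /beta_minus; ring.
exact: J1_beta_minus.
Qed.

Lemma J1_beta_sign k :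
  J 1 ((beta - (-1) ^+ k * 8%:R) - ratP (8%:R - (-1) ^+ k * 8%:R)).
Proof.
have -> : beta - (-1) ^+ k * 8%:R - ratP (8%:R - (-1) ^+ k * 8%:R) = beta_minus.
  by rewrite /beta_minus !sign_oddE; case: (odd k); ring.
exact: J1_beta_minus.
Qed.

Definition congr_gamma (g : nat) (x : P) (c : rat) : Prop :=
  J g.+1 (x - ratP c * gamma ^+ g).

Lemma congr_gammaB g x y c d :
  congr_gamma g x c -> congr_gamma g y d -> congr_gamma g (x - y) (c - d).
Proof.
move=> Jx Jy; rewrite /congr_gamma.
have -> : x - y - ratP (c - d) * gamma ^+ g
    = (x - ratP c * gamma ^+ g) - (y - ratP d * gamma ^+ g) by ring.
exact: ideal3B.
Qed.

Lemma congr_gammaMn g N x c :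
  congr_gamma g x c -> congr_gamma g (N%:R * x) (N%:R * c).
Proof.
rewrite /congr_gamma => Jx.
have -> : N%:R * x - ratP (N%:R * c) * gamma ^+ g
    = N%:R * (x - ratP c * gamma ^+ g) by ring.
exact: ideal3Ml.
Qed.

Lemma congr_gamma_natr_cancel g N x c : (0 < N)%N ->
  congr_gamma g (N%:R * x) c -> congr_gamma g x (c / N%:R).
Proof.
move=> N_gt0 JNx; apply: (J_natr_cancel N_gt0).
have -> : N%:R * (x - ratP (c / N%:R) * gamma ^+ g) = N%:R * x - ratP c * gamma ^+ g.
  have NcN : N%:R * (c / N%:R) = c by rewrite mulrC divfK // pnatr_eq0 -lt0n.
  by rewrite -[in RHS]NcN; ring.
exact: JNx.
Qed.

Lemma congr_gamma_mul x v g y c : J 1 (x - ratP v) ->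
  congr_gamma g y c -> congr_gamma g (x * y) (v * c).
Proof.
rewrite /congr_gamma => Jxv Jy.
have -> : x * y - ratP (v * c) * gamma ^+ g
    = x * (y - ratP c * gamma ^+ g) + ratP c * (gamma ^+ g * (x - ratP v)) by ring.
by apply: ideal3D; apply: ideal3Ml => //; apply: gammaX_J.
Qed.

Lemma congr_gamma_mul0 x g y c : J 1 x -> congr_gamma g y c -> congr_gamma g (x * y) 0.
Proof.
move=> J1x; rewrite -(mul0r c); apply: congr_gamma_mul.
by rewrite rmorph0 mpolyC0 subr0.
Qed.

Lemma congr_gamma_gamma g y c :
  congr_gamma g y c -> congr_gamma g.+1 (gamma * y) c.
Proof.
rewrite /congr_gamma => Jy.
have -> : gamma * y - ratP c * gamma ^+ g.+1
    = gamma * (y - ratP c * gamma ^+ g) by rewrite exprS; ring.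
exact: J_gamma.
Qed.

Lemma congr_gamma_zeta g m x : (g < m)%N -> congr_gamma g (x * zeta m) 0.
Proof.
move=> lt_gm; rewrite /congr_gamma.
have -> : x * zeta m - ratP 0 * gamma ^+ g = x * zeta m by ring.
by apply: ideal3Ml; apply: zeta_in_J.
Qed.

Definition wt (n k : nat) : P := beta_minus ^+ (n + k./2) * beta_plus ^+ (n + uphalf k).

Definition wzeta (n k : nat) : P := wt n k * zeta k.

Lemma wt_shift n k : wt n.+1 k = wt n k.+2.
Proof. by rewrite /wt /= !addnS. Qed.

Lemma wt_succ n k : wt n k * (beta + (-1) ^+ k * 8%:R) = wt n k.+1.
Proof.
rewrite /wt (_ : k.+1./2 = uphalf k) // (_ : uphalf k.+1 = k./2.+1) //.
rewrite uphalf_half sign_oddE; case: (odd k);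
  by rewrite ?add0n ?add1n !addnS !exprS !exprD /beta_minus /beta_plus; ring.
Qed.

Lemma wt_succ_succ n k : wt n.+2 k = (beta - (-1) ^+ k * 8%:R) * wt n k.+3.
Proof.
rewrite /wt (_ : k.+3./2 = (uphalf k).+1) // (_ : uphalf k.+3 = k./2.+2) //.
rewrite uphalf_half sign_oddE; case: (odd k);
  by rewrite ?add0n ?add1n !addnS !addSn !exprS !exprD /beta_minus /beta_plus; ring.
Qed.

Lemma wt_succ1 n : wt n.+1 1 = beta_plus * wt n 2.
Proof. by rewrite wt_shift -wt_succ expr2 mulN1r opprK mul1r mulrC. Qed.

Lemma wzeta_rec0 n : wzeta n.+1 0 = wt n 1 * zeta 2 - alpha * wzeta n 1.
Proof. by rewrite /wzeta /wt zeta2 zeta0 !addn0 !addn1 !exprS; ring. Qed.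

Lemma wzeta_recS n k :
  (k.+2 ^ 2)%:R * wzeta n k.+1 = wt n k * zeta k.+3 - alpha * (wt n k * zeta k.+2)
                                 - (2 * k.+2 * k.+1)%:R * gamma * wzeta n k.
Proof. by rewrite /wzeta -wt_succ zeta_rec; ring. Qed.

Lemma wt_zeta3_congr m k c : congr_gamma (m + k.+3) (wzeta m k.+3) c ->
  congr_gamma (m.+2 + k).+1 (wt m.+2 k * zeta k.+3) ((8%:R - (-1) ^+ k * 8%:R) * c).
Proof.
rewrite wt_succ_succ -mulrA !addSn -!addnS.
exact: congr_gamma_mul (J1_beta_sign k).
Qed.

Lemma wt1_zeta2_congr m c : congr_gamma (m + 2) (wzeta m 2) c ->
  congr_gamma m.+2 (wt m.+1 1 * zeta 2) (16%:R * c).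
Proof. by rewrite wt_succ1 -mulrA addn2; apply: congr_gamma_mul J1_beta_plus. Qed.

Lemma wzeta_congr0 n c1 d :
  congr_gamma n.+1 (wt n 1 * zeta 2) d -> congr_gamma n.+1 (wzeta n 1) c1 ->
  congr_gamma n.+1 (wzeta n.+1 0) d.
Proof.
move=> top mid; rewrite wzeta_rec0 -[d]subr0.
by apply: congr_gammaB => //; apply: congr_gamma_mul0 J1_alpha mid.
Qed.

Lemma wzeta_congrS n k c0 c1 d :
  congr_gamma (n + k) (wzeta n k) c0 ->
  congr_gamma (n + k).+1 (wt n k * zeta k.+2) c1 ->
  congr_gamma (n + k).+1 (wt n k * zeta k.+3) d ->
  congr_gamma (n + k).+1 (wzeta n k.+1)
              ((d - (2 * k.+2 * k.+1)%:R * c0) / (k.+2 ^ 2)%:R).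
Proof.
move=> low mid top; apply: congr_gamma_natr_cancel; first by rewrite expn_gt0.
rewrite wzeta_recS -mulrA -[d]subr0.
apply: congr_gammaB; first by apply: congr_gammaB => //; apply: congr_gamma_mul0 J1_alpha mid.
by apply: congr_gammaMn; apply: congr_gamma_gamma.
Qed.

Lemma sign_step k (c0 d : rat) :
  0 < (-1) ^+ k * c0 -> 0 <= (-1) ^+ k.+1 * d ->
  0 < (-1) ^+ k.+1 * ((d - (2 * k.+2 * k.+1)%:R * c0) / (k.+2 ^ 2)%:R).
Proof.
move=> c0_pos d_nneg; rewrite mulrA divr_gt0 ?ltr0n ?expn_gt0 //.
have -> : (-1) ^+ k.+1 * (d - (2 * k.+2 * k.+1)%:R * c0)
    = (-1) ^+ k.+1 * d + (2 * k.+2 * k.+1)%:R * ((-1) ^+ k * c0) by rewrite exprS; ring.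
by rewrite ltr_wpDl // mulr_gt0 // ltr0n.
Qed.

Lemma sign_top k (c : rat) :
  0 < (-1) ^+ k.+3 * c -> 0 <= (-1) ^+ k.+1 * ((8%:R - (-1) ^+ k * 8%:R) * c).
Proof. by rewrite !sign_oddE /=; case: (odd k) => /=; lra. Qed.

Lemma wzeta_congr n k : exists2 c, congr_gamma (n + k) (wzeta n k) c
                                  & (~~ odd n -> 0 < (-1) ^+ k * c).
Proof.
elim/ltn_ind: n k => n IHn; elim=> [|k [c0 low sign0]].
  case: n IHn => [|n] IHn.
    exists 1; last by rewrite mul1r.
    rewrite /congr_gamma /wzeta /wt zeta0 !expr0 !mul1r rmorph1 mpolyC1 mulr1 subrr.
    exact: ideal3_0.
  have [c1 mid _] := IHn n (ltnSn n) 1%N; rewrite addn1 in mid.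
  have [d top sign_d] : exists2 d, congr_gamma n.+1 (wt n 1 * zeta 2) d & (odd n -> 0 < d).
    case: n IHn {mid} => [|m] IHn; first by exists 0; [apply: congr_gamma_zeta|].
    have [c2 wc2 sign2] := IHn m (leqnSn _) 2%N.
    exists (16%:R * c2); first exact: wt1_zeta2_congr.
    by move=> /sign2; rewrite sign_oddE mul1r; apply: mulr_gt0; rewrite ?ltr0n.
  exists d; first by rewrite addn0; exact: wzeta_congr0 top mid.
  by rewrite mul1r negbK.
have [c1 mid] : exists c1, congr_gamma (n + k).+1 (wt n k * zeta k.+2) c1.
  case: n IHn {low sign0} => [|m] IHn; first by exists 0; apply: congr_gamma_zeta.
  have [c1 wc1 _] := IHn m (ltnSn m) k.+2.
  by exists c1; rewrite wt_shift addSn -!addnS; exact: wc1.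
have [d top sign_d] : exists2 d, congr_gamma (n + k).+1 (wt n k * zeta k.+3) d
                               & (~~ odd n -> 0 <= (-1) ^+ k.+1 * d).
  case: n IHn {low sign0 mid} => [|[|m]] IHn;
    try by exists 0; [apply: congr_gamma_zeta | rewrite mulr0].
  have [c2 wc2 sign2] := IHn m (leqnSn _) k.+3.
  exists ((8%:R - (-1) ^+ k * 8%:R) * c2); first exact: wt_zeta3_congr.
  by rewrite /= negbK => /sign2 /sign_top.
exists ((d - (2 * k.+2 * k.+1)%:R * c0) / (k.+2 ^ 2)%:R).
  by rewrite addnS; exact: wzeta_congrS low mid top.
by move=> n_even; apply: sign_step; [apply: sign0 | apply: sign_d].
Qed.

Theorem lemma4p2 (g j : nat) :
  odd g -> (j <= (g.-1)./2)%N ->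
  exists c : rat, 0 < c /\
    congr_mod_J g
      (beta_minus ^+ (j + (g.-1)./2) * beta_plus ^+ (g.-1) * zeta (g - 2 * j - 1))
      ((ratr c : algC) *: gamma ^+ (g.-1)).
Proof.
move=> g_odd; rewrite -[g]odd_double_half g_odd add1n /= doubleK.
move: g./2 => h le_jh; have [i ->] : exists i, h = (j + i)%N by exists (h - j)%N; lia.
have [c wc] := wzeta_congr j.*2 i.*2.
rewrite sign_oddE !odd_double mul1r => /(_ isT) c_pos.
have J1_beta_plusX : J 1 (beta_plus ^+ i - ratP (16%:R ^+ i)).
  by rewrite !rmorphXn; apply: ideal3_subX J1_beta_plus.
exists (16%:R ^+ i * c); split; first by rewrite mulr_gt0 // exprn_gt0 // ltr0n.
have -> : beta_minus ^+ (j + (j + i)) * beta_plus ^+ (j + i).*2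
          * zeta ((j + i).*2.+1 - 2 * j - 1) = beta_plus ^+ i * wzeta j.*2 i.*2.
  rewrite /wzeta /wt doubleK uphalf_double.
  have -> : ((j + i).*2.+1 - 2 * j - 1 = i.*2)%N by rewrite -!mul2n; lia.
  have -> : (j + (j + i) = j.*2 + i)%N by rewrite -!mul2n; lia.
  have -> : ((j + i).*2 = i + (j.*2 + i))%N by rewrite -!mul2n; lia.
  by rewrite !exprD; ring.
rewrite /congr_mod_J -mul_mpolyC doubleD.
exact: congr_gamma_mul J1_beta_plusX wc.
Qed.
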